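(* A lattice polytope $Q\subset\mathbb R^{\widetilde E}$ is a deformation of the polystellahedral fan $\Sigma_{\mathbf a}$ (i.e. its inner normal fan coarsens $\Sigma_{\mathbf a}$) if and only if $Q$ is a translate of $I(\pi^*(\mathrm P))$ for some polymatroid $\mathrm P$ on $E$ (of arbitrary type).
   Context: $E=\{1,\dots,m\}$, $\mathbf a\in\mathbb Z_{\ge0}^m$, $n=\sum a_i$, $\widetilde E$ an $n$-element set, $\pi:\widetilde E\to E$ with $|\pi^{-1}(i)|=a_i$, $\mathbf e_U=\sum_{j\in U}\mathbf e_j$. The polystellahedral fan $\Sigma_{\mathbf a}$ in $\mathbb R^{\widetilde E}$ has cones $\operatorname{cone}(-\mathbf e_{\widetilde E\setminus\pi^{-1}(F_1)},\dots,-\mathbf e_{\widetilde E\setminus\pi^{-1}(F_k)},\mathbf e_j:j\in I)$ for $I\subseteq\widetilde E$ and chains $F_1\subsetneq\dots\subsetneq F_k\subsetneq F_{k+1}=E$ ($k\ge0$) with $\pi^{-1}(A)\subseteq I\Rightarrow A\subseteq F_1$. A polymatroid on $E$ of arbitrary type is a submodular monotone $\operatorname{rk}_{\mathrm P}:2^E\to\mathbb Z_{\ge0}$ with $\operatorname{rk}_{\mathrm P}(\emptyset)=0$; its independence polytope is $I(\mathrm P)=\{x\in\mathbb R^E_{\ge0}:\sum_{i\in S}x_i\le\operatorname{rk}_{\mathrm P}(S)\ \forall S\subseteq E\}$. The expansion $\pi^*(\mathrm P)$ is the polymatroid on $\widetilde E$ with rank function $\operatorname{rk}_{\mathrm P}\circ\pi$;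 equivalently $I(\pi^*(\mathrm P))=p_\pi^{-1}(I(\mathrm P))\cap\mathbb R^{\widetilde E}_{\ge0}$ where $p_\pi:\mathbb R^{\widetilde E}\to\mathbb R^E$, $\mathbf e_j\mapsto\mathbf e_{\pi(j)}$. *)

From HB Require Import structures.
From mathcomp Require Import all_boot all_order all_algebra.
From mathcomp Require Import classical_sets reals.
Set Implicit Arguments. Unset Strict Implicit. Unset Printing Implicit Defensive.
Import Order.TTheory GRing.Theory Num.Theory.
Local Open Scope ring_scope.
Local Open Scope classical_set_scope.

Section Defs.
Variable R : realType.

Definition dotv n (w x : 'rV[R]_n) : R := \sum_(j < n) w 0 j * x 0 j.

Definition evec n (U : {set 'I_n}) : 'rV[R]_n := \row_j (j \in U)%:R.

Definition conv n (s : seq 'rV[R]_n) : set 'rV[R]_n :=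
  [set x | exists c : 'I_(size s) -> R,
     (forall i, 0 <= c i) /\ \sum_i c i = 1 /\ x = \sum_i c i *: s`_i].

Definition cone_gen n (s : seq 'rV[R]_n) : set 'rV[R]_n :=
  [set x | exists c : 'I_(size s) -> R,
     (forall i, 0 <= c i) /\ x = \sum_i c i *: s`_i].

Definition lattice_point n (v : 'rV[R]_n) : Prop := forall j, v 0 j \is a Num.int.

Definition lattice_polytope n (Q : set 'rV[R]_n) : Prop :=
  exists s : seq 'rV[R]_n, s != [::] /\ (forall v, v \in s -> lattice_point v) /\
    Q = conv s.

Definition face n (Q : set 'rV[R]_n) (w : 'rV[R]_n) : set 'rV[R]_n :=
  [set x | Q x /\ forall y, Q y -> dotv w x <= dotv w y].

(* Cones of the polystellahedral fan: chains F_1 < ... < F_k < E given as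
   the sequence [:: F_1; ...; F_k] (k >= 0), and I a subset of E~. *)
Definition polystell_chain m n (pi : 'I_n -> 'I_m)
    (I : {set 'I_n}) (F : seq {set 'I_m}) : Prop :=
  sorted (fun A B : {set 'I_m} => A \proper B) F /\
  (forall A, A \in F -> A \proper [set: 'I_m]%SET) /\
  (forall A : {set 'I_m}, pi @^-1: A \subset I -> A \subset head [set: 'I_m]%SET F).

Definition polystell_cone m n (pi : 'I_n -> 'I_m)
    (I : {set 'I_n}) (F : seq {set 'I_m}) : set 'rV[R]_n :=
  cone_gen (map (fun A : {set 'I_m} => - evec (~: (pi @^-1: A))%SET) F ++
            map (fun j : 'I_n => evec [set j]%SET) (enum I)).

(* Q is a deformation of Sigma_a: its inner normal fan coarsens Sigma_a, i.e.
   every cone of Sigma_a lies in a cone N_Q(F) = {w | F ⊆ face_w Q} of the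
   (inner) normal fan of Q, F = face_{w0} Q a face of Q. *)
Definition deformation_of_polystell m n (pi : 'I_n -> 'I_m)
    (Q : set 'rV[R]_n) : Prop :=
  forall (I : {set 'I_n}) (F : seq {set 'I_m}), polystell_chain pi I F ->
    exists w0 : 'rV[R]_n, forall w, polystell_cone pi I F w ->
      face Q w0 `<=` face Q w.

End Defs.

Definition polymatroid (T : finType) (rk : {set T} -> nat) : Prop :=
  rk (@finset.set0 T) = 0%N /\
  (forall A B : {set T}, A \subset B -> (rk A <= rk B)%N) /\
  (forall A B : {set T}, (rk (A :|: B) + rk (A :&: B) <= rk A + rk B)%N).

Definition expansion m n (pi : 'I_n -> 'I_m) (rk : {set 'I_m} -> nat)
  : {set 'I_n} -> nat := fun S => rk (pi @: S).

Definition indep_polytope (R : realType) n (rk : {set 'I_n} -> nat)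
  : set 'rV[R]_n :=
  [set x | (forall j, 0 <= x 0 j) /\
           forall S : {set 'I_n}, \sum_(j in S) x 0 j <= (rk S)%:R].

Definition translate (R : realType) n (t : 'rV[R]_n) (P : set 'rV[R]_n)
  : set 'rV[R]_n := [set x + t | x in P].

(* A polytope is a deformation of the polystellahedral fan iff for every cone of the fan
   some point of the polytope minimizes all the generators of the cone at once.
   For [t + I(pi^* P)] such points are greedy points along orders of the ground set
   compatible with the chain of the cone.  Conversely, the cone with [I] everything
   gives a point [t] of [Q] below [Q] coordinatewise, and the excess
   [rk A = max_(y in Q) sum_(j in pi^-1 A) (y_j - t_j)] is integral.  Along any list [L],
   the cone of the complements of the prefixes of [L] yields a point of [Q] maximizing
   the excess of every prefix simultaneously.  Using [A :&: B] and [A :|: B] as prefixes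
   gives submodularity; using an order adapted to a direction [w] shows that no point of
   [t + I(pi^* rk)] is separated from [Q] by [w], hence equality by Gordan's theorem. *)

From HB Require Import structures.
From mathcomp Require Import all_boot all_order all_algebra.
From mathcomp Require Import classical_sets reals.
(* Give precedence to the finset lemmas shadowed by classical_sets ([subsetP], ...). *)
From mathcomp Require Import fintype finset.
From mathcomp Require Import ring lra zify.

Set Implicit Arguments. Unset Strict Implicit. Unset Printing Implicit Defensive.
Import Order.TTheory GRing.Theory Num.Theory.
Local Open Scope ring_scope.

Section DotProduct.
Variables (R : realType) (n : nat).
Implicit Types (w x y : 'rV[R]_n).

Lemma dotvC w x : dotv w x = dotv x w.
Proof. by apply: eq_bigr => j _; rewrite mulrC. Qed.

Lemma dotvDr w x y : dotv w (x + y) = dotv w x + dotv w y.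
Proof. by rewrite /dotv -big_split; apply: eq_bigr => j _; rewrite mxE mulrDr. Qed.

Lemma dotvZr c w x : dotv w (c *: x) = c * dotv w x.
Proof. by rewrite /dotv mulr_sumr; apply: eq_bigr => j _; rewrite mxE mulrCA. Qed.

Lemma dotvNr w x : dotv w (- x) = - dotv w x.
Proof. by rewrite -scaleN1r dotvZr mulN1r. Qed.

Lemma dotvBr w x y : dotv w (x - y) = dotv w x - dotv w y.
Proof. by rewrite dotvDr dotvNr. Qed.

Lemma dotv0r w : dotv w 0 = 0.
Proof. by rewrite -(scale0r 0) dotvZr mul0r. Qed.

Lemma dotvDl w x y : dotv (w + x) y = dotv w y + dotv x y.
Proof. by rewrite dotvC dotvDr !(dotvC y). Qed.

Lemma dotvZl c w x : dotv (c *: w) x = c * dotv w x.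
Proof. by rewrite dotvC dotvZr dotvC. Qed.

Lemma dotvNl w x : dotv (- w) x = - dotv w x.
Proof. by rewrite dotvC dotvNr dotvC. Qed.

Lemma dotv_sumr k (c : 'I_k -> R) (v : 'I_k -> 'rV[R]_n) w :
  dotv w (\sum_i c i *: v i) = \sum_i c i * dotv w (v i).
Proof.
elim/big_rec2: _ => [|i a b _ IH]; first exact: dotv0r.
by rewrite dotvDr dotvZr IH.
Qed.

Lemma dotv_suml k (c : 'I_k -> R) (v : 'I_k -> 'rV[R]_n) w :
  dotv (\sum_i c i *: v i) w = \sum_i c i * dotv (v i) w.
Proof. by rewrite dotvC dotv_sumr; under eq_bigr do rewrite dotvC. Qed.

Lemma dotv_evec U x : dotv (evec R U) x = \sum_(j in U) x 0 j.
Proof.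
rewrite /dotv [RHS]big_mkcond; apply: eq_bigr => j _; rewrite mxE.
by case: (j \in U); rewrite ?mul1r ?mul0r.
Qed.

Lemma dotv_evec1 j x : dotv (evec R [set j]) x = x 0 j.
Proof. by rewrite dotv_evec big_set1. Qed.

Lemma dotv_self_gt0 x : x != 0 -> 0 < dotv x x.
Proof.
have sq_ge0 j : 0 <= x 0 j * x 0 j by rewrite -expr2 sqr_ge0.
move=> x_neq0; rewrite lt_def sumr_ge0 ?andbT //.
apply: contra x_neq0 => /eqP /psumr_eq0P x0; apply/eqP/rowP => j; rewrite mxE.
by apply/eqP; rewrite -sqrf_eq0 expr2 x0.
Qed.

End DotProduct.

Section ConvexHull.
Variables (R : realType) (n : nat).
Implicit Types (s : seq 'rV[R]_n) (w y : 'rV[R]_n).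

Lemma conv_nth s (i : 'I_(size s)) : conv s s`_i.
Proof.
exists (fun j => (j == i)%:R); split=> [j|]; first by case: (j == i).
split; first by rewrite (bigD1 i) //= eqxx big1 ?addr0 // => j /negbTE ->.
rewrite (bigD1 i) //= eqxx scale1r big1 ?addr0 // => j /negbTE ->.
by rewrite scale0r.
Qed.

Lemma conv_dotv_ge s w a y :
  (forall i : 'I_(size s), a <= dotv w s`_i) -> conv s y -> a <= dotv w y.
Proof.
move=> s_ge [c [c_ge0 [c_sum1 ->]]]; rewrite dotv_sumr.
rewrite -[a]mul1r -c_sum1 mulr_suml.
by apply: ler_sum => i _; apply: ler_wpM2l.
Qed.

Lemma conv_dotv_le s w a y :
  (forall i : 'I_(size s), dotv w s`_i <= a) -> conv s y -> dotv w y <= a.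
Proof.
move=> s_le y_in; rewrite -lerN2 -dotvNl; apply: (conv_dotv_ge _ y_in) => i.
by rewrite dotvNl lerN2.
Qed.

Lemma conv_argmin s w : s != [::] ->
  exists i : 'I_(size s), forall y, conv s y -> dotv w s`_i <= dotv w y.
Proof.
case: s => // v s _.
pose i0 : 'I_(size (v :: s)) := ord0.
have [i _ i_min] := @arg_minP _ R _ i0 predT (fun i => dotv w (v :: s)`_i) isT.
by exists i => y; apply: conv_dotv_ge => j; exact: i_min.
Qed.

End ConvexHull.

Section Gordan.
Variables (R : realType) (n : nat).

Definition zero_in_hull k (a : 'I_k -> 'rV[R]_n) : Prop :=
  exists c : 'I_k -> R,
    [/\ forall i, 0 <= c i, \sum_i c i = 1 & \sum_i c i *: a i = 0].

Lemma ord_max_cases k (P : 'I_k.+1 -> Prop) :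
  (forall j : 'I_k, P (widen_ord (leqnSn k) j)) -> P ord_max -> forall i, P i.
Proof.
move=> P_widen P_max i; have [j ->|-> //] := unliftP ord_max i.
by have -> : lift ord_max j = widen_ord (leqnSn k) j by apply: val_inj; exact: lift_max.
Qed.

Section GordanStep.
Variables (k : nat) (a : 'I_k.+1 -> 'rV[R]_n).
Local Notation wid j := (widen_ord (leqnSn k) j).

Lemma zero_in_hull_recr (c : 'I_k -> R) ck :
  (forall j, 0 <= c j) -> 0 <= ck -> \sum_j c j + ck = 1 ->
  \sum_j c j *: a (wid j) + ck *: a ord_max = 0 -> zero_in_hull a.
Proof.
move=> c_ge0 ck_ge0 c_sum1 c_sum0.
exists (fun i => if insub (val i) is Some j then c j else ck).
split=> [i||]; first by case: insub.
  by rewrite big_ord_recr /= insubF ?ltnn //; under eq_bigr do rewrite valK.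
by rewrite big_ord_recr /= insubF ?ltnn //; under eq_bigr do rewrite valK.
Qed.

Variable w : 'rV[R]_n.
Hypothesis w_sep : forall j, 1 <= dotv w (a (wid j)).
Local Notation b := (dotv w (a ord_max)).

Lemma gordan_step_pos : 0 < b -> exists u, forall i, 1 <= dotv u (a i).
Proof.
move=> b_gt0; exists ((1 + b^-1) *: w); apply: ord_max_cases => [j|]; rewrite dotvZl.
  have : 0 <= b^-1 by rewrite invr_ge0 ltW.
  by have := w_sep j; nra.
by rewrite mulrDl mul1r mulVf ?gt_eqF //; lra.
Qed.

(* With [N = dotv ak ak], the summand [N^-1 *: ak] takes care of [ak = a ord_max],
   and [lam] is large enough to dominate its pairing with the other vectors. *)
Lemma gordan_step_zero : b = 0 -> a ord_max != 0 -> exists u, forall i, 1 <= dotv u (a i).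
Proof.
move=> b0 ak_neq0; set ak := a ord_max in b0 ak_neq0 *.
have N_gt0 := dotv_self_gt0 ak_neq0; set N := dotv ak ak in N_gt0.
pose lam := 1 + \sum_j `|dotv ak (a (wid j))| / N.
exists (lam *: w + N^-1 *: ak); apply: ord_max_cases => [j|]; rewrite dotvDl !dotvZl.
  set d := dotv ak _; have d_le : `|d| / N <= lam - 1.
    rewrite /lam addrAC subrr add0r (bigD1 j) //= lerDl.
    by apply: sumr_ge0 => i _; rewrite divr_ge0 // ltW.
  have d_ge0 : 0 <= `|d| / N by rewrite divr_ge0 // ltW.
  have lam_ge1 : 1 <= lam by lra.
  have d_ge : - (`|d| / N) <= N^-1 * d.
    rewrite -mulNr [N^-1 * _]mulrC; apply: ler_wpM2r; first by rewrite invr_ge0 ltW.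
    exact: lerNnormlW.
  have : lam <= lam * dotv w (a (wid j)) by rewrite ler_peMr ?w_sep // (le_trans ler01).
  lra.
by rewrite b0 mulr0 add0r mulVf ?gt_eqF.
Qed.

(* The point where the segment from [a ord_max] to [a (wid j)] crosses the
   hyperplane [w = 0]. *)
Definition gordan_proj (j : 'I_k) : 'rV[R]_n :=
  (dotv w (a (wid j)) - b)^-1 *: (dotv w (a (wid j)) *: a ord_max - b *: a (wid j)).

Hypothesis b_lt0 : b < 0.

Lemma gordan_gap_gt0 j : 0 < dotv w (a (wid j)) - b.
Proof. by rewrite subr_gt0 (lt_le_trans b_lt0) // (le_trans ler01). Qed.

Lemma gordan_step_neg_sep :
  (exists u, forall j, 1 <= dotv u (gordan_proj j)) ->
  exists u, forall i, 1 <= dotv u (a i).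
Proof.
move=> [u u_sep]; exists (u + (dotv u (a ord_max) - 1) / - b *: w).
apply: ord_max_cases => [j|]; rewrite dotvDl dotvZl; last first.
  have -> : (dotv u (a ord_max) - 1) / - b * b = 1 - dotv u (a ord_max).
    by field; rewrite ?oppr_eq0 lt_eqF.
  lra.
have := u_sep j; rewrite /gordan_proj dotvZr dotvBr !dotvZr.
have := w_sep j; set al := dotv w (a (wid j)); set xj := dotv u (a (wid j)).
set y := dotv u (a ord_max).
move=> al_ge1; rewrite ler_pdivlMl ?gordan_gap_gt0 // mulr1 => proj_ge.
rewrite -subr_ge0.
have -> : xj + (y - 1) / - b * al - 1 = (al * y - b * xj - (al - b)) / - b.
  by field; rewrite lt_eqF.
by rewrite divr_ge0 ?subr_ge0 // oppr_ge0 ltW.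
Qed.

Lemma gordan_step_neg_hull : zero_in_hull gordan_proj -> zero_in_hull a.
Proof.
move=> [c [c_ge0 c_sum1 c_sum0]].
pose d j := c j / (dotv w (a (wid j)) - b).
have d_ge0 j : 0 <= d j by rewrite divr_ge0 // ltW ?gordan_gap_gt0.
pose ck := \sum_j d j * dotv w (a (wid j)).
apply: (zero_in_hull_recr (c := fun j => - b * d j) (ck := ck)).
- by move=> j; rewrite mulr_ge0 // oppr_ge0 ltW.
- by apply: sumr_ge0 => j _; rewrite mulr_ge0 //; have := w_sep j; lra.
- rewrite -c_sum1 -big_split; apply: eq_bigr => j _ /=; rewrite /d.
  by field; rewrite gt_eqF ?gordan_gap_gt0.
- rewrite scaler_suml -big_split -[RHS]c_sum0; apply: eq_bigr => j _.
  rewrite /gordan_proj /d scalerA scalerBr !scalerA /= addrC -scaleNr.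
  by congr (_ + _ *: _); rewrite mulNr mulrC.
Qed.

End GordanStep.

Lemma gordan k (a : 'I_k -> 'rV[R]_n) :
  (exists w, forall i, 1 <= dotv w (a i)) \/ zero_in_hull a.
Proof.
elim: k a => [|k IH] a; first by left; exists 0 => -[].
have [[w w_sep]|] := IH (fun j => a (widen_ord (leqnSn k) j)); last first.
  move=> [c [c_ge0 c_sum1 c_sum0]]; right.
  apply: (zero_in_hull_recr c_ge0 (lexx 0)); first by rewrite addr0.
  by rewrite scale0r addr0.
have [b_gt0|b_le0] := ltrP 0 (dotv w (a ord_max)); first by left; exact: gordan_step_pos.
have [b0|b_neq0] := eqVneq (dotv w (a ord_max)) 0.
  have [ak0|ak_neq0] := eqVneq (a ord_max) 0; last by left; exact: gordan_step_zero.
  right; apply: (zero_in_hull_recr (c := fun _ => 0) (ck := 1)) => //.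
    by rewrite big1 ?add0r.
  by rewrite big1 ?add0r ?ak0 ?scale1r // => j _; rewrite scale0r.
have b_lt0 : dotv w (a ord_max) < 0 by rewrite lt_neqAle b_neq0.
have [u_sep|hull] := IH (gordan_proj a w); [left|right].
  exact: gordan_step_neg_sep.
exact: gordan_step_neg_hull.
Qed.

Lemma separation (s : seq 'rV[R]_n) z :
  conv s z \/ exists w, forall y, conv s y -> dotv w z + 1 <= dotv w y.
Proof.
have [[w w_sep]|[c [c_ge0 c_sum1 c_sum0]]] := gordan (fun i : 'I_(size s) => s`_i - z).
  right; exists w => y; apply: conv_dotv_ge => i.
  by have := w_sep i; rewrite dotvBr; lra.
left; exists c; split=> //; split=> //; apply/eqP; rewrite eq_sym -subr_eq0.
rewrite -[X in _ == X]c_sum0; under [X in _ == X]eq_bigr do rewrite scalerBr.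
by rewrite sumrB -scaler_suml c_sum1 scale1r.
Qed.

End Gordan.

Section NormalFan.
Variables (R : realType) (n : nat).
Local Open Scope classical_set_scope.

Definition common_minimizer (Q : set 'rV[R]_n) (gs : seq 'rV[R]_n) x : Prop :=
  Q x /\ forall g, g \in gs -> forall y, Q y -> dotv g x <= dotv g y.

Lemma cone_gen_mem (gs : seq 'rV[R]_n) g : g \in gs -> cone_gen gs g.
Proof.
move=> g_in; pose i0 : 'I_(size gs) := Ordinal (etrans (index_mem g gs) g_in).
exists (fun i => (i == i0)%:R); split=> [i|]; first by case: (i == i0).
rewrite (bigD1 i0) //= eqxx scale1r big1 ?addr0 ?nth_index // => i /negbTE ->.
by rewrite scale0r.
Qed.

(* [x] lies on every face [face Q w], [w] in the cone; the sum of the generators exposes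
   a face on which every generator is constant, hence contained in all of them. *)
Lemma common_minimizer_face_sub Q gs x : common_minimizer Q gs x ->
  exists w0, forall w, cone_gen gs w -> face Q w0 `<=` face Q w.
Proof.
move=> [Qx x_min]; exists (\sum_(i < size gs) 1 *: gs`_i).
move=> _ [c [c_ge0 ->]] y [Qy y_min].
have x_min_i (i : 'I_(size gs)) y' : Q y' -> dotv gs`_i x <= dotv gs`_i y'.
  by move=> Qy'; apply: x_min => //; exact: mem_nth.
have gap_ge0 (i : 'I_(size gs)) : 0 <= 1 * dotv gs`_i y - 1 * dotv gs`_i x.
  by rewrite !mul1r subr_ge0 x_min_i.
have /psumr_eq0P gap0 : \sum_(i < size gs) (1 * dotv gs`_i y - 1 * dotv gs`_i x) = 0.
  apply/eqP; rewrite eq_le sumr_ge0 ?andbT // sumrB -!dotv_suml subr_le0.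
  exact: y_min.
have y_eq (i : 'I_(size gs)) : dotv gs`_i y = dotv gs`_i x.
  by apply/eqP; rewrite -subr_eq0 -[dotv _ y]mul1r -[dotv _ x]mul1r gap0.
split=> // y' Qy'; rewrite !dotv_suml; apply: ler_sum => i _.
by rewrite y_eq; apply: ler_wpM2l => //; exact: x_min_i.
Qed.

Lemma face_sub_common_minimizer (s gs : seq 'rV[R]_n) : s != [::] ->
  (exists w0, forall w, cone_gen gs w -> face (conv s) w0 `<=` face (conv s) w) ->
  exists x, common_minimizer (conv s) gs x.
Proof.
move=> s_neq0 [w0 face_sub]; have [i i_min] := conv_argmin w0 s_neq0.
have face_i : face (conv s) w0 s`_i by split=> //; exact: conv_nth.
exists s`_i; split=> [|g /cone_gen_mem /face_sub /(_ _ face_i) []//]; exact: conv_nth.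
Qed.

End NormalFan.

Section PolystellahedralCones.
Variables (R : realType) (m n : nat) (pi : 'I_n -> 'I_m).
Implicit Types (I : {set 'I_n}) (F : seq {set 'I_m}) (Q : set 'rV[R]_n).

Definition polystell_gens I F : seq 'rV[R]_n :=
  map (fun A : {set 'I_m} => - evec R (~: (pi @^-1: A))%SET) F ++
  map (fun j : 'I_n => evec R [set j]%SET) (enum I).

Lemma common_minimizer_polystellP Q I F x :
  common_minimizer Q (polystell_gens I F) x <->
  [/\ Q x, forall j y, j \in I -> Q y -> x 0 j <= y 0 j &
      forall A y, A \in F -> Q y ->
        \sum_(j in pi @^-1: ~: A) y 0 j <= \sum_(j in pi @^-1: ~: A) x 0 j].
Proof.
split=> [[Qx x_min]|[Qx I_min F_max]]; split=> //.
- move=> j y jI Qy; rewrite -!dotv_evec1; apply: x_min Qy.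
  by rewrite mem_cat; apply/orP; right; apply/mapP; exists j; rewrite ?mem_enum.
- move=> A y AF Qy; rewrite -!dotv_evec -lerN2 -!dotvNl preimsetC; apply: x_min Qy.
  by rewrite mem_cat; apply/orP; left; apply/mapP; exists A.
move=> g; rewrite mem_cat => /orP[/mapP[A AF ->]|/mapP[j jI ->]] y Qy.
  by rewrite !dotvNl lerN2 -preimsetC !dotv_evec F_max.
by rewrite !dotv_evec1 I_min // -mem_enum.
Qed.

Lemma deformation_of_common_minimizers Q :
  (forall I F, polystell_chain pi I F ->
     exists x, common_minimizer Q (polystell_gens I F) x) ->
  deformation_of_polystell pi Q.
Proof. by move=> minimizer I F /minimizer [x /common_minimizer_face_sub]. Qed.

Lemma common_minimizer_of_deformation (s : seq 'rV[R]_n) I F : s != [::] ->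
  deformation_of_polystell pi (conv s) -> polystell_chain pi I F ->
  exists x, common_minimizer (conv s) (polystell_gens I F) x.
Proof. by move=> s_neq0 deform /deform; exact: face_sub_common_minimizer. Qed.

Lemma conv_coordinate_minimizer (s : seq 'rV[R]_n) : s != [::] ->
  deformation_of_polystell pi (conv s) ->
  exists2 t, conv s t & forall j y, conv s y -> t 0 j <= y 0 j.
Proof.
move=> s_neq0 deform; have chain0 : polystell_chain pi setT [::].
  by split=> //; split=> // A _; exact: subsetT.
have [t /common_minimizer_polystellP[t_in t_min _]] :=
  common_minimizer_of_deformation s_neq0 deform chain0.
by exists t => // j y; apply: t_min; rewrite inE.
Qed.

End PolystellahedralCones.

Section SubsetSums.
Variables (R : realDomainType) (T : finType).
Implicit Types (X Y : {set T}) (f : T -> R).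

Lemma sumr_subset_le X Y f : X \subset Y -> (forall j, j \in Y -> 0 <= f j) ->
  \sum_(j in X) f j <= \sum_(j in Y) f j.
Proof.
move=> XY f_ge0; rewrite [X in _ <= X](big_setID X) /= (setIidPr XY) lerDl.
by apply: sumr_ge0 => j /setDP[jY _]; exact: f_ge0.
Qed.

Lemma sumr_setUI X Y f :
  \sum_(j in X :|: Y) f j + \sum_(j in X :&: Y) f j =
  \sum_(j in X) f j + \sum_(j in Y) f j.
Proof.
rewrite (big_setID X) /= setUK setDUl setDv set0U [Z in _ = _ + Z](big_setID X) /=.
by rewrite setIC addrAC addrA.
Qed.

End SubsetSums.

Section Greedy.
Variables (R : realType) (T : finType) (rk : {set T} -> nat).
Hypothesis rk_poly : polymatroid rk.
Let rk_mono : forall A B : {set T}, A \subset B -> (rk A <= rk B)%N := rk_poly.2.1.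
Let rk_submod : forall A B : {set T}, (rk (A :|: B) + rk (A :&: B) <= rk A + rk B)%N :=
  rk_poly.2.2.

Definition prefix_set (L : seq T) p : {set T} := [set x in take p L].

Definition greedy (L : seq T) i : R :=
  if i \in L then
    (rk (prefix_set L (index i L).+1))%:R - (rk (prefix_set L (index i L)))%:R
  else 0.

Lemma greedy_ge0 L i : 0 <= greedy L i.
Proof.
rewrite /greedy; case: ifP => // _; rewrite subr_ge0 ler_nat; apply: rk_mono.
apply/subsetP => x; rewrite !inE -(take_takel _ (leqnSn _)); exact: mem_take.
Qed.

Lemma greedy_take L p i : i \in take p L -> greedy (take p L) i = greedy L i.
Proof.
move=> i_in; have i_index : index i L = index i (take p L).
  by rewrite -[L in index _ L](cat_take_drop p) index_cat i_in.
have i_lt := index_ltn i_in.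
by rewrite /greedy /prefix_set i_in (mem_take i_in) -i_index !take_takel // ltnW.
Qed.

Lemma set_rcons (L : seq T) a : [set x in rcons L a] = a |: [set x in L].
Proof. by apply/setP => x; rewrite !inE mem_rcons in_cons. Qed.

Lemma greedy_rcons_last L a : a \notin L ->
  greedy (rcons L a) a = (rk (a |: [set x in L]))%:R - (rk [set x in L])%:R.
Proof.
move=> aL; rewrite /greedy /prefix_set mem_rcons mem_head -cats1 index_cat (negbTE aL).
rewrite /= eqxx addn0 take_oversize ?size_cat ?addn1 // take_size_cat //.
by rewrite cats1 set_rcons.
Qed.

Lemma greedy_rcons L a i : i != a -> greedy (rcons L a) i = greedy L i.
Proof.
move=> i_neq_a; have [iL|iL] := boolP (i \in L).
  have takeL : take (size L) (rcons L a) = L by rewrite -cats1 take_size_cat.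
  by rewrite -[in RHS]takeL greedy_take ?takeL.
by rewrite /greedy mem_rcons in_cons (negbTE i_neq_a) (negbTE iL).
Qed.

Lemma greedy_sum_le L : uniq L -> forall U : {set T},
  \sum_(i in U) greedy L i <= (rk (U :&: [set x in L]))%:R.
Proof.
elim/last_ind: L => [_ U|L a IH]; first by rewrite big1 ?ler0n // => i _; rewrite /greedy.
rewrite rcons_uniq set_rcons => /andP[aL /IH {}IH] U.
have [aU|aU] := boolP (a \in U); last first.
  have -> : U :&: (a |: [set x in L]) = U :&: [set x in L].
    by apply/setP => x; rewrite !inE; have [->|] := eqVneq x a; rewrite ?(negbTE aU).
  rewrite (eq_bigr (greedy L)) // => i iU; rewrite greedy_rcons //.
  by apply: contraNneq aU => <-.
rewrite (bigD1 a) //= greedy_rcons_last //.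
rewrite (eq_bigl (mem (U :\ a))) => [|i]; last by rewrite !inE andbC.
rewrite (eq_bigr (greedy L)) => [|i]; last first.
  by rewrite !inE => /andP[ia _]; rewrite greedy_rcons.
have := IH (U :\ a); have -> : (U :\ a) :&: [set x in L] = U :&: [set x in L].
  by apply/setP => x; rewrite !inE; have [->|] := eqVneq x a; rewrite ?(negbTE aL) ?andbF.
have := rk_submod [set x in L] (U :&: (a |: [set x in L])).
have -> : [set x in L] :|: U :&: (a |: [set x in L]) = a |: [set x in L].
  apply/setP => x; rewrite !inE; have [->|_] := eqVneq x a; first by rewrite aU orbT.
  by case: (x \in L); case: (x \in U).
have -> : [set x in L] :&: (U :&: (a |: [set x in L])) = U :&: [set x in L].
  by apply/setP => x; rewrite !inE; case: (x \in L); case: (x \in U); case: (x == a).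
rewrite -(ler_nat R) !natrD; lra.
Qed.

Lemma greedy_sum_prefix L p : uniq L ->
  \sum_(i in prefix_set L p) greedy L i = (rk (prefix_set L p))%:R.
Proof.
move=> uL; rewrite (eq_bigr (greedy (take p L))) => [|i]; last first.
  by rewrite inE => /greedy_take.
rewrite /prefix_set; elim/last_ind: (take p L) (take_uniq p uL) => [_|L' a IH].
  by rewrite (eq_bigl (mem set0)) => [|x]; rewrite ?inE // big_set0 rk_poly.1.
rewrite rcons_uniq set_rcons => /andP[aL' /IH {}IH].
rewrite big_setU1 ?inE //= greedy_rcons_last // (eq_bigr (greedy L')) ?IH ?subrK // => i.
by rewrite inE => iL'; rewrite greedy_rcons //; apply: contraNneq aL' => <-.
Qed.

End Greedy.

Lemma prefix_set_proper (T : finType) (L : seq T) p q : uniq L ->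
  (p < q <= size L)%N -> prefix_set L p \proper prefix_set L q.
Proof.
move=> uL /andP[pq q_le]; rewrite properEcard; apply/andP; split.
  apply/subsetP => x; rewrite !inE -(take_takel L (ltnW pq)); exact: mem_take.
rewrite /prefix_set !cardsE !(card_uniqP _) ?take_uniq // !size_takel //.
exact: leq_trans (ltnW pq) q_le.
Qed.

Lemma chain_prefix_list (T : finType) (C : seq {set T}) :
  sorted (fun X Y : {set T} => Y \subset X) C ->
  exists L : seq T, [/\ uniq L, [set x in L] = head set0 C &
    forall X, X \in C -> exists2 p, (p <= size L)%N & prefix_set L p = X].
Proof.
elim: C => [_|X C IH C_sorted].
  by exists [::]; split=> //; apply/setP => x; rewrite !inE.
have [L [uL setL prefixL]] := IH (path_sorted C_sorted).
have head_sub : head set0 C \subset X.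
  by case: C C_sorted {IH setL prefixL} => [_|Y C /andP[]]; rewrite ?sub0set.
have setLX : [set x in L ++ enum (X :\: head set0 C)] = X.
  apply/setP => x; rewrite inE mem_cat mem_enum -setL !inE.
  by case: (boolP (x \in L)) => //= xL; apply/esym/(subsetP head_sub); rewrite -setL inE.
exists (L ++ enum (X :\: head set0 C)); split=> //.
  rewrite cat_uniq uL enum_uniq andbT /=; apply/hasPn => x.
  by rewrite mem_enum -setL !inE => /andP[].
move=> Y; rewrite in_cons => /predU1P[->|/prefixL[p p_le <-]].
  by exists (size (L ++ enum (X :\: head set0 C))); rewrite // /prefix_set take_size.
exists p; first by rewrite size_cat (leq_trans p_le) ?leq_addr.
by rewrite /prefix_set takel_cat.
Qed.

Lemma polymatroid_expansion m n (pi : 'I_n -> 'I_m) (rk : {set 'I_m} -> nat) :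
  polymatroid rk -> polymatroid (expansion pi rk).
Proof.
move=> [rk0 [rk_mono rk_submod]]; rewrite /expansion; split; first by rewrite imset0.
split=> [A B AB|A B]; first exact: rk_mono (imsetS _ AB).
rewrite imsetU; apply: leq_trans (rk_submod _ _); rewrite leq_add2l; apply: rk_mono.
apply/subsetP => i /imsetP[j]; rewrite inE => /andP[jA jB] ->.
by rewrite inE !imset_f.
Qed.

Lemma greedy_indep (R : realType) n (rk : {set 'I_n} -> nat) L :
  polymatroid rk -> uniq L -> indep_polytope rk (\row_j greedy R rk L j).
Proof.
move=> rk_poly uL; split=> [j|S]; first by rewrite mxE greedy_ge0.
under eq_bigr do rewrite mxE.
apply: le_trans (greedy_sum_le R rk_poly uL S) _.
by rewrite ler_nat; apply: rk_poly.2.1; exact: subsetIl.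
Qed.

Section IndepTranslateDeformation.
Variables (R : realType) (m n : nat) (pi : 'I_n -> 'I_m).

Lemma polystell_chain_head_sub I F A :
  polystell_chain pi I F -> A \in F -> head setT F \subset A.
Proof.
case: F => [_|A0 F [F_sorted _]]; first by rewrite in_nil.
rewrite in_cons => /predU1P[-> //|AF].
have := order_path_min (fun B A C : {set 'I_m} => @proper_trans _ A B C) F_sorted.
by move=> /allP /(_ A AF) /proper_sub.
Qed.

Lemma polystell_chain_fiber I F A i : polystell_chain pi I F -> A \in F ->
  i \notin A -> exists2 j, pi j = i & j \notin I.
Proof.
move=> chainF AF iA; have [_ [_ head_cond]] := chainF.
have : ~~ (pi @^-1: [set i] \subset I).
  apply: contra iA => /head_cond /subsetP /(_ i); rewrite inE eqxx => /(_ isT).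
  exact: (subsetP (polystell_chain_head_sub chainF AF)).
by case/subsetPn => j; rewrite !inE => /eqP pj jI; exists j.
Qed.

Variable rk : {set 'I_m} -> nat.
Hypothesis rk_poly : polymatroid rk.

(* The witness is the greedy point of [pi^* rk] along a list of the fibres over the
   complements [~: A], [A \in F], largest complement first, with [I] left out. *)
Lemma deformation_indep_translate t :
  deformation_of_polystell pi (translate t (@indep_polytope R n (expansion pi rk))).
Proof.
have rk_poly' := polymatroid_expansion pi rk_poly.
apply: deformation_of_common_minimizers => I F chainF.
pose C := [seq (pi @^-1: ~: A) :\: I | A <- F].
have C_sorted : sorted (fun X Y : {set 'I_n} => Y \subset X) C.
  rewrite sorted_map; apply: sub_sorted chainF.1 => A B /proper_sub AB.
  by apply/setSD/preimsetS; rewrite setCS.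
have [L [uL setL prefixL]] := chain_prefix_list C_sorted.
pose g := \row_j greedy R (expansion pi rk) L j.
have L_out j : j \in L -> j \notin I.
  move=> jL; have : j \in head set0 C by rewrite -setL inE.
  by rewrite /C; case: (F) => [|A F'] /=; rewrite ?inE // => /andP[].
have g_out j : j \in I -> greedy R (expansion pi rk) L j = 0.
  by move=> jI; rewrite /greedy; case: ifP => // /L_out; rewrite jI.
exists (g + t); apply/common_minimizer_polystellP; split.
- by exists g => //; exact: greedy_indep.
- move=> j _ jI [z [z_ge0 _] <-]; rewrite !mxE g_out // lerD2r; exact: z_ge0.
move=> A _ AF [z [_ z_le] <-]; under eq_bigr do rewrite mxE.
under [X in _ <= X]eq_bigr do rewrite !mxE.
rewrite !big_split lerD2r /=.
have [p _ prefix_p] := prefixL _ (map_f (fun A => (pi @^-1: ~: A) :\: I) AF).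
have sum_I0 : \sum_(j in (pi @^-1: ~: A) :&: I) greedy R (expansion pi rk) L j = 0.
  by apply: big1 => j /setIP[_]; exact: g_out.
rewrite [X in _ <= X](big_setID I) /= sum_I0 add0r.
rewrite -prefix_p greedy_sum_prefix // prefix_p; apply: le_trans (z_le _) _.
rewrite ler_nat; apply: rk_poly.2.1; apply/subsetP => i /imsetP[j]; rewrite inE => jA ->.
have pjA : pi j \notin A by move: jA; rewrite !inE.
have [j' pj' j'I] := polystell_chain_fiber chainF AF pjA.
by rewrite -pj'; apply: imset_f; rewrite !inE j'I pj'.
Qed.

End IndepTranslateDeformation.

Section PrefixChain.
Variables (m n : nat) (pi : 'I_n -> 'I_m).

Definition prefix_chain (L : seq 'I_m) : seq {set 'I_m} :=
  [seq ~: prefix_set L (size L - p)%N | p <- iota 0 (size L)].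

Lemma mem_prefix_chain L p :
  (0 < p <= size L)%N -> ~: prefix_set L p \in prefix_chain L.
Proof.
move=> /andP[p_gt0 p_le]; apply/mapP; exists (size L - p)%N; last by rewrite subKn.
by rewrite mem_iota add0n leq0n ltn_subrL p_gt0 (leq_trans p_gt0 p_le).
Qed.

Lemma polystell_chain_prefix (I : {set 'I_n}) L : uniq L ->
  (forall i, i \in L -> exists2 j, pi j = i & j \notin I) ->
  polystell_chain pi I (prefix_chain L).
Proof.
move=> uL fiber; split; [|split].
- rewrite sorted_map; apply: (@sub_in_sorted _ (gtn (size L)) ltn) (iota_ltn_sorted 0 _).
    move=> p q p_lt q_lt pq /=; rewrite properC; apply: prefix_set_proper => //.
    by move: p_lt q_lt; rewrite !inE /= => p_lt q_lt; lia.
  by apply/allP => p; rewrite mem_iota.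
- move=> A /mapP[p]; rewrite mem_iota add0n => /andP[_ p_lt] ->.
  case: L uL fiber p_lt => [|a L] //= _ _ p_lt; rewrite properT.
  apply/negP => /eqP /setP /(_ a); rewrite !inE subSn //=.
  by rewrite mem_head.
- move=> A A_sub; rewrite /prefix_chain; case: L uL fiber => [|a L] //= _ fiber.
  apply/subsetP => i iA; rewrite subn0 /prefix_set (take_size (a :: L)) !inE.
  by apply/negP => /fiber[j pj]; rewrite (subsetP A_sub) // inE pj.
Qed.

End PrefixChain.

(* Abel summation; the offset [S0] carries the partial sums through the induction. *)
Lemma abel_sum_ge0 (R : realDomainType) (T : Type) (nu V : T -> R) (L : seq T) S0 :
  sorted (fun i j => nu i <= nu j) L -> all (fun i => nu i <= 0) L ->
  (forall p, S0 + \sum_(i <- take p L) V i <= 0) ->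
  0 <= \sum_(i <- L) nu i * V i + (if L is i :: _ then nu i else 0) * S0.
Proof.
elim: L S0 => [|i L IH] S0 /=; first by move=> *; rewrite big_nil mul0r addr0.
move=> L_sorted /andP[nui_le0 L_le0] partial_le0.
have nu_next : nu i <= (if L is j :: _ then nu j else 0).
  by case: L L_sorted {IH L_le0 partial_le0} => //= j L /andP[].
have S1_le0 : S0 + V i <= 0.
  by have := partial_le0 1%N; rewrite /= take0 big_cons big_nil addr0.
have := IH (S0 + V i) (path_sorted L_sorted) L_le0.
have partial_le0' p : S0 + V i + \sum_(j <- take p L) V j <= 0.
  by have := partial_le0 p.+1; rewrite /= big_cons addrA.
move=> /(_ partial_le0'); rewrite big_cons.
set h := (if L is j :: _ then nu j else 0) in nu_next *.
have : 0 <= (nu i - h) * (S0 + V i) by rewrite mulr_le0 // subr_le0.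
nra.
Qed.

Section FiberMinimum.
Variables (R : realType) (m n : nat) (pi : 'I_n -> 'I_m) (w : 'rV[R]_n).

Lemma sum_fibers (F : 'I_n -> R) (B : {set 'I_m}) :
  \sum_(j in pi @^-1: B) F j = \sum_(i in B) \sum_(j | pi j == i) F j.
Proof.
rewrite (partition_big pi (mem B)) => [|j]; last by rewrite inE.
apply: eq_bigr => i iB; apply: eq_bigl => j; rewrite inE.
by have [->|] := eqVneq (pi j) i; rewrite ?andbT ?andbF.
Qed.

Definition fiber_min i : R := \big[Order.min/0]_(j | pi j == i) w 0 j.

Lemma fiber_min_le0 i : fiber_min i <= 0.
Proof. exact: bigmin_le_id. Qed.

Lemma fiber_min_le j : fiber_min (pi j) <= w 0 j.
Proof. exact: bigmin_le_cond. Qed.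

Lemma fiber_min_lt0 i : fiber_min i < 0 -> exists2 j, pi j = i & w 0 j = fiber_min i.
Proof.
have : fiber_min i = 0 \/ exists2 j, pi j == i & fiber_min i = w 0 j.
  rewrite /fiber_min; elim/big_ind: _ => [|x y x_cases y_cases|j pj].
  - by left.
  - by case: leP => _; [exact: x_cases | exact: y_cases].
  - by right; exists j.
by case=> [->|[j /eqP pj nu_eq]]; [rewrite ltxx | exists j].
Qed.

Definition fiber_order : seq 'I_m :=
  sort (fun a b => fiber_min a <= fiber_min b) [seq i <- enum 'I_m | fiber_min i < 0].

Lemma mem_fiber_order i : (i \in fiber_order) = (fiber_min i < 0).
Proof. by rewrite mem_sort mem_filter mem_enum andbT. Qed.

Lemma fiber_order_uniq : uniq fiber_order.
Proof. by rewrite sort_uniq filter_uniq // enum_uniq. Qed.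

Lemma sum_fiber_min_mul (v : 'rV[R]_n) :
  \sum_j fiber_min (pi j) * v 0 j =
  \sum_(i <- fiber_order) fiber_min i * \sum_(j | pi j == i) v 0 j.
Proof.
rewrite (partition_big pi predT) //= (perm_big _ (permEl (perm_sort _ _))) big_filter.
rewrite big_enum_cond /= (bigID (fun i => fiber_min i < 0)) /= [X in _ + X]big1.
  by rewrite addr0; apply: eq_bigr => i _; rewrite mulr_sumr; apply: eq_bigr => j /eqP ->.
move=> i; rewrite -leNgt => nu_ge0; apply: big1 => j /eqP ->.
have -> : fiber_min i = 0 by apply/eqP; rewrite eq_le fiber_min_le0.
by rewrite mul0r.
Qed.

(* Split [w] as [(w - nu o pi) + nu o pi], with [nu = fiber_min]: the first part only
   meets coordinates where [v] is nonnegative, the second is handled by Abel summation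
   along [fiber_order]. *)
Lemma dotv_ge0_fiber_prefix (v : 'rV[R]_n) :
  (forall j, w 0 j != fiber_min (pi j) -> 0 <= v 0 j) ->
  (forall p, \sum_(j in pi @^-1: prefix_set fiber_order p) v 0 j <= 0) ->
  0 <= dotv w v.
Proof.
move=> v_ge0 prefix_le0; pose nu j := fiber_min (pi j).
rewrite /dotv (eq_bigr (fun j => (w 0 j - nu j) * v 0 j + nu j * v 0 j)); last first.
  by move=> j _; rewrite -mulrDl subrK.
rewrite big_split /=; apply: addr_ge0.
  apply: sumr_ge0 => j _; have [->|w_neq] := eqVneq (w 0 j) (nu j).
    by rewrite subrr mul0r.
  by rewrite mulr_ge0 ?v_ge0 // subr_ge0 fiber_min_le.
rewrite sum_fiber_min_mul; pose V i := \sum_(j | pi j == i) v 0 j.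
have := @abel_sum_ge0 _ _ fiber_min V fiber_order 0; rewrite mulr0 addr0; apply.
- by apply: sort_sorted => a b; exact: le_total.
- by apply/allP => i; rewrite mem_fiber_order => /ltW.
move=> p; rewrite add0r (big_uniq _ (take_uniq p fiber_order_uniq)).
rewrite (eq_bigl (fun i => i \in prefix_set fiber_order p)) => [|i]; last by rewrite inE.
by rewrite /V -sum_fibers.
Qed.

End FiberMinimum.

Section PolytopeRank.
Variables (R : realType) (m n : nat) (pi : 'I_n -> 'I_m).
Variables (s : seq 'rV[R]_n) (t : 'rV[R]_n).
Implicit Types (A B : {set 'I_m}) (x y : 'rV[R]_n).
Hypotheses (s_neq0 : s != [::]) (s_lattice : forall v, v \in s -> lattice_point v).
Hypothesis deform : deformation_of_polystell pi (conv s).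
Hypotheses (t_in : conv s t) (t_min : forall j y, conv s y -> t 0 j <= y 0 j).

Definition excess (A : {set 'I_m}) (y : 'rV[R]_n) : R :=
  \sum_(j in pi @^-1: A) (y 0 j - t 0 j).

(* The maximum of the excess over [conv s] is attained at a vertex, where it is an
   integer because the vertices and [t] are lattice points. *)
Definition polytope_rank (A : {set 'I_m}) : nat :=
  \max_(i < size s) Num.truncn (excess A s`_i).

Lemma excessE A y :
  excess A y = \sum_(j in pi @^-1: A) y 0 j - \sum_(j in pi @^-1: A) t 0 j.
Proof. by rewrite -sumrB. Qed.

Lemma excess_ge0 A y : conv s y -> 0 <= excess A y.
Proof. by move=> y_in; apply: sumr_ge0 => j _; rewrite subr_ge0 t_min. Qed.

Lemma excess_mono A B y : A \subset B -> conv s y -> excess A y <= excess B y.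
Proof.
move=> AB y_in; apply: sumr_subset_le; first exact: preimsetS.
by move=> j _; rewrite subr_ge0 t_min.
Qed.

Lemma t_int j : t 0 j \is a Num.int.
Proof.
have [i i_min] := conv_argmin (evec R [set j]) s_neq0.
have := i_min t t_in; have := t_min j (conv_nth i); rewrite !dotv_evec1 => t_le t_ge.
have -> : t 0 j = s`_i 0 j by apply/eqP; rewrite eq_le t_le t_ge.
by apply: s_lattice; exact: mem_nth.
Qed.

Lemma truncn_excess_vertex A (i : 'I_(size s)) :
  (Num.truncn (excess A s`_i))%:R = excess A s`_i.
Proof.
apply/eqP; rewrite -natrEtruncn natrEint excess_ge0 ?andbT; last exact: conv_nth.
apply: rpred_sum => j _; rewrite rpredB ?t_int //.
by apply: s_lattice; exact: mem_nth.
Qed.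

Lemma polytope_rank_ub A y : conv s y -> excess A y <= (polytope_rank A)%:R.
Proof.
move=> y_in; have := y_in; rewrite excessE -!dotv_evec lerBlDr => /conv_dotv_le.
apply=> i; rewrite -lerBlDr !dotv_evec -excessE -truncn_excess_vertex ler_nat.
exact: leq_bigmax.
Qed.

Lemma polytope_rank_max A x : conv s x ->
  (forall y, conv s y -> excess A y <= excess A x) -> excess A x = (polytope_rank A)%:R.
Proof.
move=> x_in x_max; apply/eqP; rewrite eq_le polytope_rank_ub //= /polytope_rank.
have [|i ->] := bigop.eq_bigmax (fun i : 'I_(size s) => Num.truncn (excess A s`_i)).
  by rewrite card_ord lt0n size_eq0.
by rewrite truncn_excess_vertex; apply: x_max; exact: conv_nth.
Qed.

Lemma polytope_rank0 : polytope_rank set0 = 0%N.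
Proof.
by rewrite /polytope_rank big1 // => i _; rewrite /excess preimset0 big_set0 truncn0.
Qed.

Lemma polytope_rank_mono A B : A \subset B -> (polytope_rank A <= polytope_rank B)%N.
Proof.
move=> AB; apply/bigmax_leqP => i _; apply: leq_trans (leq_bigmax i).
rewrite -(ler_nat R) !truncn_excess_vertex; apply: excess_mono AB _; exact: conv_nth.
Qed.

(* Realize the chain of complements of the prefixes of [L] as a cone of the fan:
   its common minimizer maximizes the excess of every prefix at once. *)
Lemma prefix_maximizer (I : {set 'I_n}) (L : seq 'I_m) : uniq L ->
  (forall i, i \in L -> exists2 j, pi j = i & j \notin I) ->
  exists x, [/\ conv s x, forall j, j \in I -> x 0 j = t 0 j &
    forall p, excess (prefix_set L p) x = (polytope_rank (prefix_set L p))%:R].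
Proof.
move=> uL fiber; have [x /common_minimizer_polystellP[x_in I_min chain_max]] :=
  common_minimizer_of_deformation s_neq0 deform (polystell_chain_prefix uL fiber).
exists x; split=> // [j jI|p]; first by apply/eqP; rewrite eq_le t_min // I_min.
have -> : prefix_set L p = prefix_set L (minn p (size L)).
  by rewrite /prefix_set take_min take_size.
have [q0|q_gt0] := posnP (minn p (size L)).
  rewrite q0 /prefix_set take0; have -> : [set x in [::] : seq 'I_m] = set0.
    by apply/setP => i; rewrite inE.
  by rewrite polytope_rank0 /excess preimset0 big_set0.
apply: polytope_rank_max => // y y_in; rewrite !excessE lerD2r.
have q_range : (0 < minn p (size L) <= size L)%N by rewrite q_gt0 geq_minr.
by have := chain_max _ y (mem_prefix_chain q_range) y_in; rewrite setCK.
Qed.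

Lemma polytope_rank_image A : polytope_rank A = polytope_rank (A :&: pi @: setT).
Proof.
rewrite /polytope_rank /excess; apply: eq_bigr => i _; congr Num.truncn.
by apply: eq_bigl => j; rewrite !inE imset_f ?andbT.
Qed.

Lemma excess_modular A B y :
  excess (A :|: B) y + excess (A :&: B) y = excess A y + excess B y.
Proof. by rewrite /excess preimsetU preimsetI sumr_setUI. Qed.

(* A common maximizer of the excesses of [A :&: B] and [A :|: B] exists, since both
   sets are prefixes of one list. *)
Lemma polytope_rank_submod_image A B : A \subset pi @: setT -> B \subset pi @: setT ->
  (polytope_rank (A :|: B) + polytope_rank (A :&: B) <=
   polytope_rank A + polytope_rank B)%N.
Proof.
move=> A_im B_im.
have [|L [uL setL prefixL]] := @chain_prefix_list _ [:: A :|: B; A :&: B].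
  by rewrite /= andbT; apply/subsetP => i /setIP[iA _]; rewrite inE iA.
have fiber i : i \in L -> exists2 j, pi j = i & j \notin set0.
  rewrite -[i \in L]inE setL /= inE => /orP[/(subsetP A_im)|/(subsetP B_im)];
  by case/imsetP=> j _ ->; exists j; rewrite ?inE.
have [x [x_in _ x_prefix]] := prefix_maximizer uL fiber.
have rank_prefix X : X \in [:: A :|: B; A :&: B] -> (polytope_rank X)%:R = excess X x.
  by move=> /prefixL[p _ <-]; rewrite x_prefix.
rewrite -(ler_nat R) !natrD (rank_prefix (A :|: B)) ?mem_head //.
rewrite (rank_prefix (A :&: B)) ?inE ?eqxx ?orbT // excess_modular.
by rewrite lerD ?polytope_rank_ub.
Qed.

Lemma polytope_rank_submod A B :
  (polytope_rank (A :|: B) + polytope_rank (A :&: B) <=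
   polytope_rank A + polytope_rank B)%N.
Proof.
have capE : A :&: B :&: pi @: setT = (A :&: pi @: setT) :&: (B :&: pi @: setT).
  by rewrite setIACA setIid.
rewrite polytope_rank_image setIUl (polytope_rank_image (A :&: B)) capE.
rewrite (polytope_rank_image A) (polytope_rank_image B).
by apply: polytope_rank_submod_image; exact: subsetIr.
Qed.

Lemma polytope_rank_polymatroid : polymatroid polytope_rank.
Proof.
split; first exact: polytope_rank0.
by split; [exact: polytope_rank_mono | exact: polytope_rank_submod].
Qed.

Lemma conv_sub_indep_translate y : conv s y ->
  translate t (@indep_polytope R n (expansion pi polytope_rank)) y.
Proof.
move=> y_in; exists (y - t); last by rewrite subrK.
split=> [j|S]; first by rewrite !mxE subr_ge0 t_min.
apply: le_trans (polytope_rank_ub (pi @: S) y_in); under eq_bigr do rewrite !mxE.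
apply: sumr_subset_le => [|j _]; last by rewrite subr_ge0 t_min.
by apply/subsetP => j jS; rewrite inE imset_f.
Qed.

(* Order the fibres by the minimum of [w] on them: the point maximizing the excess
   of every prefix of this order beats [z + t] in direction [w]. *)
Lemma indep_translate_dotv_ge z w :
  @indep_polytope R n (expansion pi polytope_rank) z ->
  exists2 x, conv s x & dotv w x <= dotv w (z + t).
Proof.
move=> [z_ge0 z_le]; pose I := [set j | w 0 j != fiber_min pi w (pi j)].
have fiber i : i \in fiber_order pi w -> exists2 j, pi j = i & j \notin I.
  rewrite mem_fiber_order => /fiber_min_lt0[j pj w_eq]; exists j => //.
  by rewrite inE negbK pj w_eq.
have [x [x_in x_I x_prefix]] := prefix_maximizer (fiber_order_uniq pi w) fiber.
exists x => //; rewrite -subr_ge0 -dotvBr.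
apply: (dotv_ge0_fiber_prefix (pi := pi)) => [j j_out|p].
  by rewrite !mxE x_I ?inE // addrK.
rewrite (eq_bigr (fun j => z 0 j - (x 0 j - t 0 j))) => [|j _]; last first.
  by rewrite !mxE opprB addrA.
rewrite sumrB -/(excess _ x) x_prefix subr_le0; apply: le_trans (z_le _) _.
rewrite ler_nat; apply: polytope_rank_mono; apply/subsetP => i /imsetP[j].
by rewrite inE => jB ->.
Qed.

End PolytopeRank.

Unset Implicit Arguments. Set Strict Implicit. Set Printing Implicit Defensive.
Local Open Scope classical_set_scope.

Theorem proposition2p7 (R : realType) (m n : nat) (pi : 'I_n -> 'I_m)
    (Q : set 'rV[R]_n) :
  lattice_polytope Q ->
  (deformation_of_polystell pi Q <->
   exists (rk : {set 'I_m} -> nat) (t : 'rV[R]_n),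
     polymatroid rk /\ Q = translate t (@indep_polytope R n (expansion pi rk))).
Proof.
move=> [s [s_neq0 [s_lattice ->]]]; split=> [deform|[rk [t [rk_poly ->]]]]; last first.
  exact: deformation_indep_translate.
have [t t_in t_min] := conv_coordinate_minimizer s_neq0 deform.
exists (polytope_rank pi s t), t; split.
  exact: polytope_rank_polymatroid s_neq0 s_lattice deform t_in t_min.
apply/seteqP; split=> [y|_ [z z_indep <-]]; first exact: conv_sub_indep_translate.
have [//|[w w_sep]] := separation s (z + t).
have [x x_in x_le] :=
  indep_translate_dotv_ge s_neq0 s_lattice deform t_in t_min w z_indep.
by have := w_sep x x_in; lra.
Qed.
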